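(* Let $3\le s\le t\le u$ be integers. (i) If $4\le s\le t\le u$, then $S(3;s,t,u)\ge stu-tu-u-1$. (ii) If either $3=t<u$ or $3<t\le u$, then $S(3;3,t,u)>2tu-u-1$.
   Context: For an integer $k\ge 3$, let $\mathcal{L}(k)$ denote the equation $x_1+x_2+\cdots+x_{k-1}=x_k$ in positive integer variables (the $x_i$ need not be distinct). For $N\ge1$, write $[1,N]=\{1,2,\dots,N\}$. For integers $r\ge1$ and $k_0,\dots,k_{r-1}\ge 3$, the generalized Schur number $S(r;k_0,\dots,k_{r-1})$ is the least positive integer $N$ such that for every coloring $\Delta:[1,N]\to\{0,1,\dots,r-1\}$ there exist some $i\in\{0,\dots,r-1\}$ and positive integers $x_1,\dots,x_{k_i}\in[1,N]$ satisfying $\mathcal{L}(k_i)$ with $\Delta(x_1)=\cdots=\Delta(x_{k_i})=i$. Thus $S(3;s,t,u)$ is the least $N$ such that every 3-coloring of $[1,N]$ has a monochromatic solution to $\mathcal{L}(s)$ in the first color, to $\mathcal{L}(t)$ in the second color, or to $\mathcal{L}(u)$ in the third color. *)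

From mathcomp Require Import all_boot.
Set Implicit Arguments. Unset Strict Implicit. Unset Printing Implicit Defensive.

(* [is_mono_sol Delta N i m] : there are positive integers x_1,...,x_m in [1,N]
   (indexed here 0..m-1) with x_1 + ... + x_{m-1} = x_m, all of color i. *)
Definition is_mono_sol (Delta : nat -> nat) (N i m : nat) : Prop :=
  exists x : nat -> nat,
    (forall j, j < m -> (1 <= x j <= N) /\ Delta (x j) = i) /\
    \sum_(j < m.-1) x j = x m.-1.

(* The generalized Schur number S(r; k_0,...,k_{r-1}) is the least N with
   this property. *)
Definition schur_prop (ks : seq nat) (N : nat) : Prop :=
  forall Delta : nat -> nat,
    (forall x, 1 <= x <= N -> Delta x < size ks) ->
    exists2 i, i < size ks & is_mono_sol Delta N i (nth 0 ks i).

From mathcomp Require Import all_boot zify.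

(* Call a coloring of [1, n] good when no color class contains a solution of
   its equation.  A good coloring for k_1, ..., k_r on [1, n] extends, for any
   k >= max k_i, to a good coloring for k_1, ..., k_r, k on [1, k (n + 1) - 2]:
   the new color takes the block (n, D] with D = (k - 1)(n + 1) - 1, too short
   to hold a solution of L(k), and the old coloring is copied onto (D, D + n].
   A sum of k_i - 1 elements of an old class involves at most one element of
   the copy (two would overshoot D + n), and subtracting D brings it back to a
   solution in the original class.  Three extensions of the empty coloring of
   [1, 0] reach [1, stu - tu - u - 2].
   For s = 3 an explicit coloring of [1, 2tu - u - 1] is used, with
   m = (u - 1)(2t - 1): the first color is {1, 2t - 2, 2t, m, m + 2}, the second
   [2, 2t - 3] together with its translate by m + 1, and the third the rest,
   [2t - 1, m + 1] minus {2t, m}; a sum of u - 1 elements of the latter is m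
   when all equal 2t - 1, and at least m + 2 otherwise. *)

Set Implicit Arguments.
Unset Strict Implicit.
Unset Printing Implicit Defensive.

Definition sum_free (k : nat) (S : pred nat) : Prop :=
  forall x : nat -> nat,
    (forall j, j < k.-1 -> S (x j)) -> ~~ S (\sum_(j < k.-1) x j).

Definition union_shift (D : nat) (S : pred nat) : pred nat :=
  [pred y | S y || (D < y) && S (y - D)].

Lemma sum_ord_ge n a (x : nat -> nat) :
  (forall j, j < n -> a <= x j) -> n * a <= \sum_(j < n) x j.
Proof.
move=> le_ax; rewrite -[n in n * a]card_ord -sum_nat_const.
by apply: leq_sum => j _; apply: le_ax.
Qed.

Lemma sum_ord_le n b (x : nat -> nat) :
  (forall j, j < n -> x j <= b) -> \sum_(j < n) x j <= n * b.
Proof.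
move=> le_xb; rewrite -[n in n * b]card_ord -sum_nat_const.
by apply: leq_sum => j _; apply: le_xb.
Qed.

Lemma sum_ord_ge_term n a (x : nat -> nat) (i : 'I_n) :
  (forall j, j < n -> a <= x j) -> x i + n.-1 * a <= \sum_(j < n) x j.
Proof.
move=> le_ax; rewrite (bigD1 i) //= leq_add2l -[n in n.-1]card_ord -(cardC1 i).
by rewrite -sum_nat_const; apply: leq_sum => j _; apply: le_ax.
Qed.

Lemma sum_ord_ge_pair n (x : nat -> nat) (i j : 'I_n) :
  i != j -> x i + x j <= \sum_(l < n) x l.
Proof.
move=> ne_ij; rewrite (bigD1 i) //= leq_add2l (bigD1 j) 1?eq_sym //=.
exact: leq_addr.
Qed.

Lemma sum_free_sub k (S T : pred nat) :
  subpred T S -> sum_free k S -> sum_free k T.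
Proof.
move=> sub_TS sfS x Tx.
by apply: contraNN (sfS x (fun j lt_j => sub_TS _ (Tx j lt_j))); apply: sub_TS.
Qed.

Lemma sum_free_interval k a b :
  b < k.-1 * a -> sum_free k [pred y | a <= y <= b].
Proof.
move=> lt_b x ab_x; have := sum_ord_ge (fun j lt_j => (andP (ab_x j lt_j)).1).
by rewrite /=; lia.
Qed.

Lemma sum_free_punctured_interval k a :
  sum_free k [pred y | (a <= y <= (k.-1 * a).+1) && (y != a.+1) && (y != k.-1 * a)].
Proof.
move=> x Px; have ge_a j : j < k.-1 -> a <= x j by move/Px => /andP[/andP[/andP[]]].
have [i ne_ia | eq_a] := pickP (fun i : 'I_k.-1 => x i != a).
  have km1 : k.-1 * a = a + k.-1.-1 * a.
    by rewrite -mulSn prednK // (leq_ltn_trans _ (ltn_ord i)).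
  have := sum_ord_ge_term i ge_a; have := Px i (ltn_ord i); rewrite /= in ne_ia *; lia.
have -> : \sum_(j < k.-1) x j = k.-1 * a.
  rewrite -[k.-1 in RHS]card_ord -sum_nat_const; apply: eq_bigr => j _.
  by apply/eqP; move: (eq_a j) => /= /negbFE.
by rewrite /= eqxx !andbF.
Qed.

Lemma sum_free_union_shift k (S : pred nat) c D :
  sum_free k S -> (forall y, S y -> y <= c) -> k.-1 * c <= D -> c <= D ->
  sum_free k (union_shift D S).
Proof.
move=> sfS le_Sc le_kcD le_cD x Sx.
have le_shift y : union_shift D S y -> y <= D + c.
  by case/orP => [/le_Sc | /andP[lt_Dy /le_Sc]]; lia.
have [i lt_Dxi | small] := pickP (fun i : 'I_k.-1 => D < x i); last first.
  have {}Sx j : j < k.-1 -> S (x j).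
    move=> lt_j; have /negbT := small (Ordinal lt_j).
    by case/orP: (Sx j lt_j) => // /andP[->].
  have le_sum : \sum_(j < k.-1) x j <= D.
    by apply: leq_trans le_kcD; apply: sum_ord_le => j /Sx /le_Sc.
  by apply: contraNN (sfS x Sx) => /orP[// | /andP[lt_D _]]; lia.
have [j /andP[ne_ji lt_Dxj] | one] := pickP (fun j : 'I_k.-1 => (j != i) && (D < x j)).
  by apply/negP => /le_shift; have := sum_ord_ge_pair x ne_ji; lia.
pose x' j := if j == i :> nat then x j - D else x j.
have Sx' j : j < k.-1 -> S (x' j).
  move=> lt_j; rewrite /x'; case: eqP => [-> | ne_ji].
    by case/orP: (Sx i (ltn_ord i)) => [/le_Sc | /andP[]]; [lia | ].
  case/orP: (Sx j lt_j) => // /andP[lt_Dxj _].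
  have := one (Ordinal lt_j); rewrite /= lt_Dxj andbT.
  by move=> /negbT/negPn/eqP/(congr1 val).
have sum_x : \sum_(j < k.-1) x j = D + \sum_(j < k.-1) x' j.
  rewrite (bigD1 i) //= [in RHS](bigD1 i) //= /x' eqxx addnA subnKC 1?ltnW //.
  by congr (_ + _); apply: eq_bigr => j ne_ji; rewrite ifN.
have := sum_ord_ge_term i (fun j _ => leq0n (x j)).
rewrite muln0 addn0 => le_xi_sum.
apply: contraNN (sfS x' Sx'); rewrite /union_shift inE /= sum_x addKn.
by case/orP => [/le_Sc | /andP[]]; [lia | ].
Qed.

Definition color_class (Delta : nat -> nat) (n i : nat) : pred nat :=
  [pred y | (1 <= y <= n) && (Delta y == i)].

Definition sum_free_coloring (ks : seq nat) (n : nat) (Delta : nat -> nat) : Prop :=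
  (forall y, 1 <= y <= n -> Delta y < size ks) /\
  (forall i, i < size ks -> sum_free (nth 0 ks i) (color_class Delta n i)).

Lemma sum_free_coloring_not_schur ks n N Delta :
  0 \notin ks -> sum_free_coloring ks n Delta -> N <= n -> ~ schur_prop ks N.
Proof.
move=> ks_gt0 [Delta_lt sfDelta] le_Nn schurN.
have [i lt_i [x [x_col sum_x]]] : exists2 i, i < size ks & is_mono_sol Delta N i (nth 0 ks i).
  by apply: schurN => y /andP[y_gt0 le_yN]; rewrite Delta_lt // y_gt0 (leq_trans le_yN).
have k_gt0 : 0 < nth 0 ks i.
  by rewrite lt0n; apply: contraNneq ks_gt0 => <-; apply: mem_nth.
have x_class j : j < nth 0 ks i -> color_class Delta n i (x j).
  move/x_col => [/andP[x_gt0 le_xN] col_x].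
  by rewrite /color_class /= x_gt0 (leq_trans le_xN le_Nn) col_x eqxx.
have := sfDelta i lt_i x (fun j lt_j => x_class j (leq_trans lt_j (leq_pred _))).
by rewrite sum_x x_class // ltn_predL.
Qed.

Lemma sum_free_coloring_of_cover ks n (Ps : seq (pred nat)) :
  size Ps = size ks ->
  (forall i, i < size ks -> sum_free (nth 0 ks i) (nth xpred0 Ps i)) ->
  (forall y, 1 <= y <= n -> has (fun P : pred nat => P y) Ps) ->
  sum_free_coloring ks n (fun y => find (fun P : pred nat => P y) Ps).
Proof.
move=> size_Ps sfPs cover; split=> [y /cover | i lt_i].
  by rewrite -size_Ps -has_find.
apply: (sum_free_sub _ (sfPs i lt_i)) => y /andP[/cover has_y /eqP <-].
exact: (nth_find xpred0 has_y).
Qed.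

Definition extend_coloring (r n D : nat) (Delta : nat -> nat) (y : nat) : nat :=
  if y <= n then Delta y else if y <= D then r else Delta (y - D).

Lemma sum_free_coloring_rcons ks k n Delta :
  sum_free_coloring ks n Delta -> 1 < k -> all (leq^~ k) ks ->
  sum_free_coloring (rcons ks k) (k * n.+1 - 2)
    (extend_coloring (size ks) n (k.-1 * n.+1 - 1) Delta).
Proof.
move=> [Delta_lt sfDelta] k_gt1 ks_le; set D := k.-1 * n.+1 - 1.
have lt_n_kn : n < k.-1 * n.+1 by rewrite leq_pmull // -ltnS prednK // ltnW.
have le_nD : n <= D by rewrite /D; lia.
have -> : k * n.+1 - 2 = D + n.
  by rewrite /D -[k in k * _](prednK (ltnW k_gt1)) mulSn; lia.
have Delta_lt_shift y : D < y <= D + n -> Delta (y - D) < size ks.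
  by move=> ?; apply: Delta_lt; lia.
split=> [y /andP[y_gt0 le_yDn] | i]; rewrite size_rcons /extend_coloring.
  case: (leqP y n) => [le_yn | lt_ny]; first by rewrite ltnS ltnW // Delta_lt ?y_gt0.
  case: (leqP y D) => [// | lt_Dy].
  by rewrite ltnS ltnW // Delta_lt_shift ?lt_Dy.
rewrite ltnS leq_eqVlt => /orP[/eqP -> | lt_ir]; rewrite nth_rcons.
  rewrite ltnn eqxx; apply: (sum_free_sub _ (sum_free_interval (a := n.+1) (b := D) _)).
    move=> y /andP[/andP[y_gt0 le_yDn]].
    case: (leqP y n) => [le_yn | lt_ny]; first by rewrite (ltn_eqF (Delta_lt y _)) ?y_gt0.
    case: (leqP y D) => [le_yD _ | lt_Dy]; first by rewrite /= lt_ny.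
    by rewrite (ltn_eqF (Delta_lt_shift y _)) ?lt_Dy.
  by rewrite /D; lia.
rewrite lt_ir.
have le_ki : nth 0 ks i <= k by apply: (allP ks_le); apply: mem_nth.
apply: (sum_free_sub _ (sum_free_union_shift (sfDelta i lt_ir) (c := n) _ _ le_nD)).
- move=> y /andP[/andP[y_gt0 le_yDn]]; rewrite /union_shift /color_class /=.
  case: (leqP y n) => [le_yn -> | lt_ny]; first by rewrite y_gt0.
  case: (leqP y D) => [le_yD /eqP eq_ri | lt_Dy ->]; first by rewrite -eq_ri ltnn in lt_ir.
  rewrite andbT; lia.
- by move=> y /andP[/andP[]].
- have : (nth 0 ks i).-1 * n <= k.-1 * n by rewrite leq_mul2r -!subn1 leq_sub2r ?orbT.
  by rewrite /D; lia.
Qed.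

Lemma not_schur_prop_stu s t u N :
  2 <= s <= t -> t <= u -> N <= s * t * u - t * u - u - 2 ->
  ~ schur_prop [:: s; t; u] N.
Proof.
move=> /andP[s_gt1 le_st] le_tu le_N.
have col0 : sum_free_coloring [::] 0 (fun=> 0) by split=> // y; lia.
have col1 := sum_free_coloring_rcons col0 s_gt1 isT.
have t_gt1 := leq_trans s_gt1 le_st.
have /(sum_free_coloring_rcons col1 t_gt1) col2 : all (leq^~ t) [:: s] by rewrite /= le_st.
have /(sum_free_coloring_rcons col2 (leq_trans t_gt1 le_tu)) col3 :
  all (leq^~ u) [:: s; t] by rewrite /= le_tu (leq_trans le_st).
apply: (sum_free_coloring_not_schur _ col3); first by rewrite !inE; lia.
have ts_ge2 : 2 <= t * s.-1 by rewrite -[2]/(2 * 1) leq_mul // -ltnS prednK // ltnW.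
have -> : (s * 1 - 2).+1 = s.-1 by rewrite muln1; lia.
have -> : (t * s.-1 - 2).+1 = t * s.-1 - 1 by lia.
rewrite -subn1 !mulnBr !muln1.
have : t * u <= s * t * u by rewrite -mulnA leq_pmull // ltnW.
lia.
Qed.

Lemma not_schur_prop_3tu t u N :
  3 <= t <= u -> 4 <= u -> N <= 2 * t * u - u - 1 ->
  ~ schur_prop [:: 3; t; u] N.
Proof.
move=> /andP[t_ge3 le_tu] u_ge4 le_N; set m := u.-1 * (2 * t - 1).
have m_ge : 3 * (2 * t - 1) <= m by rewrite leq_mul2r -ltnS prednK ?u_ge4 ?orbT //; lia.
pose A : pred nat := [pred y | [|| y == 1, y == 2 * t - 2, y == 2 * t, y == m | y == m + 2]].
pose B := union_shift m.+1 [pred y | 2 <= y <= 2 * t - 3].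
pose C : pred nat := [pred y | (2 * t - 1 <= y <= m.+1) && (y != (2 * t - 1).+1) && (y != m)].
apply: (sum_free_coloring_not_schur _ (sum_free_coloring_of_cover (ks := [:: 3; t; u])
          (n := m + 2 * t - 2) (Ps := [:: A; B; C]) erefl _ _)).
- by rewrite !inE; lia.
- case=> [|[|[|//]]] _ /=.
  + move=> x Ax; rewrite !big_ord_recr big_ord0 /=.
    by have := Ax 0 isT; have := Ax 1 isT; rewrite /A /=; lia.
  + apply: (sum_free_union_shift (sum_free_interval _) (c := 2 * t - 3)).
    * by rewrite -subn1; lia.
    * by move=> y /andP[].
    * by rewrite ltnW // ltnS leq_mul // ?leq_pred //; lia.
    * lia.
  + exact: sum_free_punctured_interval.
- by move=> y /andP[y_gt0 le_y]; rewrite /= /A /B /C /union_shift /=; lia.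
rewrite /m -!subn1 mulnBl mul1n mulnBr muln1 mulnA [u * 2]mulnC.
have : 2 * t <= 2 * t * u by rewrite leq_pmulr //; lia.
lia.
Qed.

Theorem proposition1 (s t u : nat) :
  3 <= s -> s <= t -> t <= u ->
  ((4 <= s ->
      forall N, schur_prop [:: s; t; u] N -> s * t * u - t * u - u - 1 <= N)
   /\
   (s = 3 -> ((3 = t /\ t < u) \/ (3 < t /\ t <= u)) ->
      forall N, schur_prop [:: 3; t; u] N -> 2 * t * u - u - 1 < N)).
Proof.
move=> s_ge3 le_st le_tu; split=> [_ N schurN | _ t_u_cases N schurN].
  rewrite leqNgt; apply/negP => lt_N.
  by apply: (not_schur_prop_stu _ le_tu _ schurN); lia.
rewrite ltnNge; apply/negP => le_N.
by apply: (not_schur_prop_3tu _ _ _ schurN); lia.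
Qed.
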